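(* Let $a>0$, $k_d>0$, $x_0\in\mathbb{R}$, $y_0\in\mathbb{R}\setminus\{0\}$, and $\rho>0$ with $\rho a>2|y_0|$. For $(\ell_1,\ell_2)\in\mathbb{Z}^2$ set $$s(\ell_1,\ell_2)=\frac{\ell_1a-x_0+i(\ell_2a-y_0)}{|\ell_1a-x_0+i(\ell_2a-y_0)|}\cdot\frac{\ell_1a-x_0-i(\ell_2a+y_0)}{|\ell_1a-x_0-i(\ell_2a+y_0)|},$$ $\epsilon^{(1)}_{\ell_1,\ell_2}=\frac{a}{2\pi}\operatorname{Arg}\frac{s(\ell_1+1,\ell_2)}{s(\ell_1,\ell_2)}$, $\epsilon^{(2)}_{\ell_1,\ell_2}=\frac{a}{2\pi}\operatorname{Arg}\frac{s(\ell_1,\ell_2+1)}{s(\ell_1,\ell_2)}$, and $\Delta^{d(i,\pm)}_{\ell_1,\ell_2}=\sqrt{(a\pm\epsilon^{(i)}_{\ell_1,\ell_2})^2+a^2}-\sqrt2a$ for $i=1,2$. For $N>\rho$ let $B'_{\rho,N}$ be the set of $(\ell_1,\ell_2)\in\mathbb{Z}^2$ with $\rho a<\sqrt{(\ell_1a-x_0)^2+(\ell_2a-y_0)^2}<Na$ and $\rho a<\sqrt{(\ell_1a-x_0)^2+(\ell_2a+y_0)^2}<Na$, and $$E_{\rho,N}(\mathcal{S})=\sum_{(\ell_1,\ell_2)\in B'_{\rho,N}}\tfrac12k_d\Big((\Delta^{d(1,+)}_{\ell_1,\ell_2})^2+(\Delta^{d(2,+)}_{\ell_1,\ell_2})^2+(\Delta^{d(1,-)}_{\ell_1,\ell_2})^2+(\Delta^{d(2,-)}_{\ell_1,\ell_2})^2\Big).$$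 Then $E_{\rho,N}(\mathcal{S})$ converges to a finite limit as $N\to\infty$.
   Context: $\operatorname{Arg}$ is the principal argument in $(-\pi,\pi]$. This is the discrete (simple cubic lattice, spacing $a$, spring model with diagonal spring constant $k_d$) elastic energy of two parallel screw dislocations of opposite signs, $\mathcal{S}_+=\{x_0+iy_0\}$ and $\mathcal{S}_-=\{x_0-iy_0\}$. *)

From Stdlib Require Import Reals Lra ZArith.
Open Scope R_scope.

Definition C := (R * R)%type.
Definition cmul (z w : C) : C :=
  (fst z * fst w - snd z * snd w, fst z * snd w + snd z * fst w).
Definition cnorm (z : C) : R := sqrt (fst z ^ 2 + snd z ^ 2).
Definition cscale (r : R) (z : C) : C := (r * fst z, r * snd z).
Definition cconj (z : C) : C := (fst z, - snd z).
(* z / w = z * conj w / |w|^2 (total: w = 0 gives 0 via Rinv 0). *)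
Definition cdiv (z w : C) : C := cscale (/ (fst w ^ 2 + snd w ^ 2)) (cmul z (cconj w)).

(* Principal argument in (-PI, PI]; Arg 0 := 0 by convention. *)
Definition Arg (z : C) : R :=
  let x := fst z in let y := snd z in
  if Rlt_dec 0 x then atan (y / x)
  else if Rlt_dec x 0 then
    (if Rle_dec 0 y then atan (y / x) + PI else atan (y / x) - PI)
  else if Rlt_dec 0 y then PI / 2
  else if Rlt_dec y 0 then - (PI / 2)
  else 0.

Section Energy.
Variables (a kd x0 y0 : R).

Definition sfun (l1 l2 : Z) : C :=
  let u : C := (IZR l1 * a - x0, IZR l2 * a - y0) in
  let v : C := (IZR l1 * a - x0, - (IZR l2 * a + y0)) in
  cmul (cscale (/ cnorm u) u) (cscale (/ cnorm v) v).

Definition eps1 (l1 l2 : Z) : R :=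
  a / (2 * PI) * Arg (cdiv (sfun (l1 + 1) l2) (sfun l1 l2)).
Definition eps2 (l1 l2 : Z) : R :=
  a / (2 * PI) * Arg (cdiv (sfun l1 (l2 + 1)) (sfun l1 l2)).

Definition Dplus (e : R) : R := sqrt ((a + e) ^ 2 + a ^ 2) - sqrt 2 * a.
Definition Dminus (e : R) : R := sqrt ((a - e) ^ 2 + a ^ 2) - sqrt 2 * a.

Definition site_energy (l1 l2 : Z) : R :=
  1 / 2 * kd * (Dplus (eps1 l1 l2) ^ 2 + Dplus (eps2 l1 l2) ^ 2
              + Dminus (eps1 l1 l2) ^ 2 + Dminus (eps2 l1 l2) ^ 2).

Definition inB (rho N : R) (l1 l2 : Z) : Prop :=
  rho * a < sqrt ((IZR l1 * a - x0) ^ 2 + (IZR l2 * a - y0) ^ 2) < N * a /\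
  rho * a < sqrt ((IZR l1 * a - x0) ^ 2 + (IZR l2 * a + y0) ^ 2) < N * a.

Definition inB_dec (rho N : R) (l1 l2 : Z) : {inB rho N l1 l2} + {~ inB rho N l1 l2}.
Proof.
  unfold inB.
  destruct (Rlt_dec (rho * a) (sqrt ((IZR l1 * a - x0) ^ 2 + (IZR l2 * a - y0) ^ 2)));
  destruct (Rlt_dec (sqrt ((IZR l1 * a - x0) ^ 2 + (IZR l2 * a - y0) ^ 2)) (N * a));
  destruct (Rlt_dec (rho * a) (sqrt ((IZR l1 * a - x0) ^ 2 + (IZR l2 * a + y0) ^ 2)));
  destruct (Rlt_dec (sqrt ((IZR l1 * a - x0) ^ 2 + (IZR l2 * a + y0) ^ 2)) (N * a));
  try (left; tauto); right; tauto.
Defined.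

(* Half-width of an integer box [-K,K]^2 containing B'_{rho,N} (for a > 0):
   |l_i a| <= |l_i a - c| + |c| < N a + |x0| + |y0|. *)
Definition boxK (N : R) : nat :=
  Z.to_nat (up (N + Rabs x0 / a + Rabs y0 / a)).

(* E_{rho,N}: sum over (l1,l2) in B'_{rho,N}, computed as a sum over the box
   [-K,K]^2 (K = boxK N) of the indicator of B' times the site energy. *)
Definition E (rho N : R) : R :=
  let K := boxK N in
  sum_f_R0 (fun i =>
    sum_f_R0 (fun j =>
      let l1 := (Z.of_nat i - Z.of_nat K)%Z in
      let l2 := (Z.of_nat j - Z.of_nat K)%Z in
      if inB_dec rho N l1 l2 then site_energy l1 l2 else 0)
    (2 * K)%nat) (2 * K)%nat.

End Energy.

From Pilot Require Import Defs.
From Stdlib Require Import Reals ZArith Lra Lia Psatz Classical.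
Open Scope R_scope.

(* The site energies are nonnegative, so E_{rho,N} is nondecreasing in N and it
   suffices to bound it uniformly.  A site energy is at most [9 kd (eps1^2 + eps2^2)].
   Writing [s = u v / (|u| |v|)] with [u = z - (x0 + i y0)] and
   [v = conj (z - (x0 - i y0))], a lattice step [h] turns the ratio of consecutive
   values of [s] into a positive multiple of [(|u|^2 + h conj u) (|v|^2 + conj h conj v)].
   The real part of this product is of order [r^4] at distance [r] from the dipole,
   and in its imaginary part the first-order contributions of the two dislocations
   of opposite signs cancel up to [O(|y0| a r^2)].  Hence [eps_i = O(r^-2)], the site
   energy is [O(r^-4)], which is dominated by [C / ((1 + l1^2) (1 + l2^2))], and the
   sum of that weight over any box is at most [25 C]. *)

Lemma Rabs_le_of_sqr_le (x s : R) : 0 <= s -> x ^ 2 <= s ^ 2 -> Rabs x <= s.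
Proof. intros Hs H. apply Rabs_le. split; nra. Qed.

Lemma cauchy_schwarz_2 (p1 p2 q1 q2 : R) :
  (p1 * q1 + p2 * q2) ^ 2 <= (p1 ^ 2 + p2 ^ 2) * (q1 ^ 2 + q2 ^ 2).
Proof. pose proof (pow2_ge_0 (p1 * q2 - p2 * q1)). nra. Qed.

Lemma Rabs_dot_le (p1 p2 q1 q2 a s : R) :
  0 <= a -> 0 <= s -> p1 ^ 2 + p2 ^ 2 = a ^ 2 -> q1 ^ 2 + q2 ^ 2 = s ^ 2 ->
  Rabs (p1 * q1 + p2 * q2) <= a * s.
Proof.
  intros Ha Hs Hp Hq. apply Rabs_le_of_sqr_le; [apply Rmult_le_pos; assumption|].
  rewrite Rpow_mult_distr, <- Hp, <- Hq. apply cauchy_schwarz_2.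
Qed.

Lemma Rabs_le_between (x b : R) : Rabs x <= b -> - b <= x <= b.
Proof.
  intro H. pose proof (Rle_abs x). pose proof (Rle_abs (- x)).
  rewrite Rabs_Ropp in *. lra.
Qed.

Lemma Rabs_mult_le (x y bx b_y : R) : Rabs x <= bx -> Rabs y <= b_y -> Rabs (x * y) <= bx * b_y.
Proof.
  intros Hx Hy. rewrite Rabs_mult.
  apply Rmult_le_compat; try apply Rabs_pos; assumption.
Qed.

Lemma sqr_le_of_Rabs_le (x b : R) : Rabs x <= b -> x ^ 2 <= b ^ 2.
Proof. intro H. rewrite <- (pow2_abs x). apply pow_incr. split; [apply Rabs_pos | exact H]. Qed.

Lemma Rabs_atan_le (t : R) : Rabs (atan t) <= Rabs t.
Proof.
  destruct (MVT_abs atan (fun x => / (1 + x ^ 2)) 0 t) as [c [Hc _]].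
  { intros c _; apply derivable_pt_lim_atan. }
  rewrite atan_0, !Rminus_0_r in Hc. rewrite Hc.
  assert (Hd : 0 < / (1 + c ^ 2) <= 1).
  { pose proof (pow2_ge_0 c). split.
    - apply Rinv_0_lt_compat; lra.
    - rewrite <- Rinv_1. apply Rinv_le_contravar; lra. }
  rewrite Rabs_pos_eq by lra.
  pose proof (Rabs_pos t). nra.
Qed.

Lemma Rabs_Arg_le (z : Defs.C) : Rabs (Arg z) <= 2 * PI.
Proof.
  destruct z as [x y]. unfold Arg; simpl.
  pose proof (atan_bound (y / x)). pose proof PI_RGT_0.
  repeat destruct Rlt_dec; try destruct Rle_dec; try destruct Rlt_dec;
    apply Rabs_le; lra.
Qed.

Lemma Arg_cscale (r : R) (z : Defs.C) : 0 < r -> Arg (cscale r z) = Arg z.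
Proof.
  intro Hr. destruct z as [x y]. unfold Arg, cscale; simpl.
  destruct (Req_dec x 0) as [->|Hx].
  - rewrite Rmult_0_r.
    destruct (Rlt_dec 0 0); [lra|]. destruct (Rlt_dec 0 0); [lra|].
    destruct (Rlt_dec 0 (r * y)), (Rlt_dec 0 y); try nra;
    destruct (Rlt_dec (r * y) 0), (Rlt_dec y 0); try nra; reflexivity.
  - replace (r * y / (r * x)) with (y / x) by (field; lra).
    destruct (Rlt_dec 0 (r * x)), (Rlt_dec 0 x); try reflexivity; try (exfalso; nra).
    destruct (Rlt_dec (r * x) 0), (Rlt_dec x 0); try (exfalso; nra).
    destruct (Rle_dec 0 (r * y)), (Rle_dec 0 y); try reflexivity; exfalso; nra.
Qed.

Lemma Rabs_Arg_le_of_re_pos (z : Defs.C) :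
  0 < fst z -> Rabs (Arg z) <= Rabs (snd z) / fst z.
Proof.
  destruct z as [x y]; simpl; intro Hx. unfold Arg; simpl.
  destruct (Rlt_dec 0 x); [|lra].
  eapply Rle_trans; [apply Rabs_atan_le|].
  unfold Rdiv. rewrite Rabs_mult, Rabs_inv, (Rabs_pos_eq x) by lra. lra.
Qed.

Lemma Rabs_scaled_Arg_le (a : R) (z : Defs.C) : 0 < a -> Rabs (a / (2 * PI) * Arg z) <= a.
Proof.
  intro Ha. pose proof PI_RGT_0. pose proof (Rabs_Arg_le z).
  rewrite Rabs_mult, Rabs_pos_eq by (apply Rlt_le, Rdiv_lt_0_compat; lra).
  apply Rle_trans with (a / (2 * PI) * (2 * PI)).
  - apply Rmult_le_compat_l; [apply Rlt_le, Rdiv_lt_0_compat|]; lra.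
  - right. field. lra.
Qed.

Definition cnorm2 (z : Defs.C) : R := fst z ^ 2 + snd z ^ 2.
Definition cnormalize (z : Defs.C) : Defs.C := cscale (/ cnorm z) z.

Lemma cnorm2_ge0 (z : Defs.C) : 0 <= cnorm2 z.
Proof. unfold cnorm2. pose proof (pow2_ge_0 (fst z)). pose proof (pow2_ge_0 (snd z)). lra. Qed.

Lemma cnorm2_cmul (z w : Defs.C) : cnorm2 (cmul z w) = cnorm2 z * cnorm2 w.
Proof. unfold cnorm2, cmul; simpl; ring. Qed.

Lemma cnorm2_cconj (z : Defs.C) : cnorm2 (cconj z) = cnorm2 z.
Proof. unfold cnorm2, cconj; simpl; ring. Qed.

Lemma cnorm2_cscale (r : R) (z : Defs.C) : cnorm2 (cscale r z) = r ^ 2 * cnorm2 z.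
Proof. unfold cnorm2, cscale; simpl; ring. Qed.

Lemma cnorm_pos (z : Defs.C) : 0 < cnorm2 z -> 0 < cnorm z.
Proof. apply sqrt_lt_R0. Qed.

Lemma cnorm2_pos_of_re_cmul_pos (z w : Defs.C) :
  0 < fst (cmul z w) -> 0 < cnorm2 z /\ 0 < cnorm2 w.
Proof.
  destruct z as [z1 z2], w as [w1 w2]; unfold cnorm2, cmul; simpl; intro H.
  split; apply Rnot_le_lt; intro H0.
  - assert (z1 = 0) by nra; assert (z2 = 0) by nra; subst; lra.
  - assert (w1 = 0) by nra; assert (w2 = 0) by nra; subst; lra.
Qed.

Lemma cnorm2_cmul_pos (z w : Defs.C) : 0 < cnorm2 (cmul z w) -> 0 < cnorm2 z /\ 0 < cnorm2 w.
Proof.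
  rewrite cnorm2_cmul. pose proof (cnorm2_ge0 z). pose proof (cnorm2_ge0 w).
  intro Hzw. split; apply Rnot_le_lt; intro; nra.
Qed.

(* The normalisations and the division only contribute a positive real factor. *)
Lemma Arg_cdiv_cnormalize (u v u' v' : Defs.C) :
  0 < fst (cmul (cmul u' v') (cconj (cmul u v))) ->
  Arg (cdiv (cmul (cnormalize u') (cnormalize v')) (cmul (cnormalize u) (cnormalize v))) =
  Arg (cmul (cmul u' v') (cconj (cmul u v))).
Proof.
  intro HP.
  destruct (cnorm2_pos_of_re_cmul_pos _ _ HP) as [H' H].
  rewrite cnorm2_cconj in H.
  destruct (cnorm2_cmul_pos _ _ H') as [Hu' Hv'].
  destruct (cnorm2_cmul_pos _ _ H) as [Hu Hv].
  set (k := / cnorm u' * / cnorm v' * / cnorm u * / cnorm v).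
  assert (Hk : 0 < k).
  { unfold k. repeat apply Rmult_lt_0_compat; apply Rinv_0_lt_compat, cnorm_pos; assumption. }
  set (D := cnorm2 (cmul (cnormalize u) (cnormalize v))).
  assert (HD : 0 < D).
  { unfold D, cnormalize. rewrite cnorm2_cmul, !cnorm2_cscale.
    pose proof (Rinv_0_lt_compat _ (cnorm_pos _ Hu)).
    pose proof (Rinv_0_lt_compat _ (cnorm_pos _ Hv)).
    apply Rmult_lt_0_compat; apply Rmult_lt_0_compat; try apply pow_lt; assumption. }
  transitivity (Arg (cscale (/ D * k) (cmul (cmul u' v') (cconj (cmul u v))))).
  2: apply Arg_cscale, Rmult_lt_0_compat; [apply Rinv_0_lt_compat|]; assumption.
  f_equal. change (cdiv ?z ?w) with (cscale (/ cnorm2 w) (cmul z (cconj w))). fold D.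
  unfold cnormalize, k.
  destruct u as [u1 u2], v as [v1 v2], u' as [p1 p2], v' as [q1 q2].
  unfold cmul, cscale, cconj; simpl. f_equal; ring.
Qed.

(* Both factors lie within [a * su <= U / 4] (resp. [a * sv <= V / 4]) of the
   positive reals [U] and [V], so the product has real part at least [U V / 2]
   and imaginary part [U IB + V IA] up to a second-order error. *)
Lemma Arg_cmul_near_positive_le (a U V su sv al be IA IB M : R) :
  0 < a -> 0 <= su -> 0 <= sv -> su ^ 2 = U -> sv ^ 2 = V -> 4 * a <= su -> 4 * a <= sv ->
  Rabs al <= a * su -> Rabs IA <= a * su -> Rabs be <= a * sv -> Rabs IB <= a * sv ->
  Rabs (U * IB + V * IA) <= M ->
  0 < fst (cmul (U + al, IA) (V + be, IB)) /\
  Rabs (Arg (cmul (U + al, IA) (V + be, IB))) * (U * V) <= 2 * (M + 2 * a ^ 2 * (su * sv)).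
Proof.
  intros Ha Hsu Hsv HU HV H4u H4v Hal HIA Hbe HIB HM.
  assert (Hsmall_u : a * su <= U / 4) by (rewrite <- HU; nra).
  assert (Hsmall_v : a * sv <= V / 4) by (rewrite <- HV; nra).
  assert (HU0 : 0 < U) by (rewrite <- HU; nra).
  assert (HV0 : 0 < V) by (rewrite <- HV; nra).
  assert (HUV : 0 < U * V) by (apply Rmult_lt_0_compat; assumption).
  assert (Hprod : Rabs (IA * IB) <= U * V / 16).
  { eapply Rle_trans; [apply (Rabs_mult_le _ _ _ _ HIA HIB)|].
    apply Rle_trans with (U / 4 * (V / 4)); [|lra].
    apply Rmult_le_compat; try assumption; apply Rmult_le_pos; lra. }
  apply Rabs_le_between in Hal, Hbe, Hprod.
  assert (Hre : U * V / 2 <= (U + al) * (V + be) - IA * IB) by nra.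
  assert (Him : Rabs ((U + al) * IB + IA * (V + be)) <= M + 2 * a ^ 2 * (su * sv)).
  { replace ((U + al) * IB + IA * (V + be)) with ((U * IB + V * IA) + (al * IB + be * IA)) by ring.
    eapply Rle_trans; [apply Rabs_triang|].
    apply Rplus_le_compat; [exact HM|].
    eapply Rle_trans; [apply Rabs_triang|].
    apply Rabs_le_between in HIA, HIB.
    pose proof (Rabs_mult_le al IB (a * su) (a * sv) ltac:(apply Rabs_le; lra) ltac:(apply Rabs_le; lra)).
    pose proof (Rabs_mult_le be IA (a * sv) (a * su) ltac:(apply Rabs_le; lra) ltac:(apply Rabs_le; lra)).
    lra. }
  unfold cmul; cbn [fst snd]. split; [lra|].
  apply Rle_trans with (Rabs ((U + al) * IB + IA * (V + be)) / (U * V / 2) * (U * V)).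
  - apply Rmult_le_compat_r; [lra|].
    eapply Rle_trans; [apply Rabs_Arg_le_of_re_pos; cbn [fst snd]; lra|]. cbn [fst snd].
    unfold Rdiv. apply Rmult_le_compat_l; [apply Rabs_pos|].
    apply Rinv_le_contravar; lra.
  - replace (Rabs ((U + al) * IB + IA * (V + be)) / (U * V / 2) * (U * V))
      with (2 * Rabs ((U + al) * IB + IA * (V + be))) by (field; lra).
    lra.
Qed.

(* [s] at the lattice site whose offset from the dipole centre [(x0, 0)] is [(X, Y)]. *)
Definition phase_factor (X Y y0 : R) : Defs.C :=
  cmul (cnormalize (X, Y - y0)) (cnormalize (X, - (Y + y0))).

(* With [u = (X, Y - y0)], [v = conj (X, Y + y0)] and the lattice step [h]:
   [u' v' conj (u v) = (|u|^2 + h conj u) (|v|^2 + conj h conj v)]. *)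
Lemma phase_step_product (y0 X Y h1 h2 : R) :
  cmul (cmul (X + h1, Y + h2 - y0) (X + h1, - (Y + h2 + y0)))
       (cconj (cmul (X, Y - y0) (X, - (Y + y0))))
  = cmul (X ^ 2 + (Y - y0) ^ 2 + (h1 * X + h2 * (Y - y0)), h2 * X + - h1 * (Y - y0))
         (X ^ 2 + (Y + y0) ^ 2 + (h1 * X + h2 * (Y + y0)), h1 * (Y + y0) + - h2 * X).
Proof. unfold cmul, cconj; cbn [fst snd]; f_equal; ring. Qed.

(* The first-order imaginary part of the product in [phase_step_product]: the
   contributions of the two dislocations cancel down to [O(|y0| a r^2)]. *)
Lemma phase_step_leading_le (a y0 X Y h1 h2 : R) :
  0 <= a -> h1 ^ 2 + h2 ^ 2 = a ^ 2 ->
  Rabs ((X ^ 2 + (Y - y0) ^ 2) * (h1 * (Y + y0) + - h2 * X)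
        + (X ^ 2 + (Y + y0) ^ 2) * (h2 * X + - h1 * (Y - y0)))
  <= 2 * Rabs y0 * (a * (X ^ 2 + Y ^ 2 + y0 ^ 2)).
Proof.
  intros Ha Hh.
  replace ((X ^ 2 + (Y - y0) ^ 2) * (h1 * (Y + y0) + - h2 * X)
           + (X ^ 2 + (Y + y0) ^ 2) * (h2 * X + - h1 * (Y - y0)))
    with (2 * y0 * ((h1 * (X ^ 2 - Y ^ 2) + h2 * (2 * X * Y)) + h1 * y0 ^ 2)) by ring.
  rewrite Rabs_mult, Rabs_mult, Rabs_pos_eq by lra.
  apply Rmult_le_compat_l; [pose proof (Rabs_pos y0); lra|].
  eapply Rle_trans; [apply Rabs_triang|].
  assert (Hq : (X ^ 2 - Y ^ 2) ^ 2 + (2 * X * Y) ^ 2 = (X ^ 2 + Y ^ 2) ^ 2) by ring.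
  pose proof (Rabs_dot_le _ _ _ _ a (X ^ 2 + Y ^ 2) Ha
                ltac:(pose proof (pow2_ge_0 X); pose proof (pow2_ge_0 Y); lra) Hh Hq).
  assert (Hh1 : Rabs h1 <= a) by (apply Rabs_le_of_sqr_le; [lra | pose proof (pow2_ge_0 h2); lra]).
  rewrite Rabs_mult, (Rabs_pos_eq (y0 ^ 2)) by apply pow2_ge_0.
  pose proof (Rmult_le_compat_r (y0 ^ 2) _ _ (pow2_ge_0 y0) Hh1).
  lra.
Qed.

Lemma dist2_shift_ge (X Y c : R) :
  4 * c ^ 2 <= X ^ 2 + Y ^ 2 -> (X ^ 2 + Y ^ 2) / 4 <= X ^ 2 + (Y - c) ^ 2.
Proof. intro H. pose proof (pow2_ge_0 (Y - 2 * c)). pose proof (pow2_ge_0 X). nra. Qed.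

Lemma Arg_phase_step_product_le (a y0 X Y h1 h2 : R) :
  0 < a -> h1 ^ 2 + h2 ^ 2 = a ^ 2 -> 64 * a ^ 2 + 4 * y0 ^ 2 <= X ^ 2 + Y ^ 2 ->
  let P := cmul (X ^ 2 + (Y - y0) ^ 2 + (h1 * X + h2 * (Y - y0)), h2 * X + - h1 * (Y - y0))
                (X ^ 2 + (Y + y0) ^ 2 + (h1 * X + h2 * (Y + y0)), h1 * (Y + y0) + - h2 * X) in
  0 < fst P /\ Rabs (Arg P) * (X ^ 2 + Y ^ 2) <= 80 * a * (Rabs y0 + a).
Proof.
  intros Ha Hh Hfar P.
  assert (Ha0 : 0 <= a) by lra. pose proof (pow_lt a 2 Ha). pose proof (pow2_ge_0 y0).
  set (r2 := X ^ 2 + Y ^ 2) in *.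
  set (U := X ^ 2 + (Y - y0) ^ 2). set (V := X ^ 2 + (Y + y0) ^ 2).
  assert (HU : r2 / 4 <= U) by (apply dist2_shift_ge; fold r2; lra).
  assert (HV : r2 / 4 <= V).
  { replace V with (X ^ 2 + (Y - - y0) ^ 2) by (unfold V; ring). apply dist2_shift_ge; fold r2; lra. }
  set (su := sqrt U). set (sv := sqrt V).
  assert (Hsu0 : 0 <= su) by apply sqrt_pos. assert (Hsv0 : 0 <= sv) by apply sqrt_pos.
  assert (Hsu : su ^ 2 = U) by (apply pow2_sqrt; lra).
  assert (Hsv : sv ^ 2 = V) by (apply pow2_sqrt; lra).
  assert (H4u : 4 * a <= su) by (eapply Rle_trans; [apply Rle_abs | apply Rabs_le_of_sqr_le; nra]).
  assert (H4v : 4 * a <= sv) by (eapply Rle_trans; [apply Rle_abs | apply Rabs_le_of_sqr_le; nra]).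
  destruct (Arg_cmul_near_positive_le a U V su sv
              (h1 * X + h2 * (Y - y0)) (h1 * X + h2 * (Y + y0))
              (h2 * X + - h1 * (Y - y0)) (h1 * (Y + y0) + - h2 * X)
              (2 * Rabs y0 * (a * (r2 + y0 ^ 2))) Ha Hsu0 Hsv0 Hsu Hsv H4u H4v)
    as [Hre Harg].
  - apply Rabs_dot_le; [exact Ha0 | exact Hsu0 | exact Hh | rewrite Hsu; reflexivity].
  - apply Rabs_dot_le; [exact Ha0 | exact Hsu0 | rewrite <- Hh; ring | rewrite Hsu; reflexivity].
  - apply Rabs_dot_le; [exact Ha0 | exact Hsv0 | exact Hh | rewrite Hsv; reflexivity].
  - apply Rabs_dot_le; [exact Ha0 | exact Hsv0 | rewrite <- Hh; ring | rewrite Hsv; unfold V; ring].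
  - apply phase_step_leading_le; assumption.
  - split; [exact Hre|].
    unfold P; fold U V. set (A := Rabs (Arg _)) in *.
    assert (HA : 0 <= A) by apply Rabs_pos.
    assert (HUV : r2 / 4 * (r2 / 4) <= U * V) by (apply Rmult_le_compat; lra).
    assert (Hsusv : su * sv <= r2 + y0 ^ 2).
    { pose proof (pow2_ge_0 (su - sv)). unfold U, V, r2 in *. nra. }
    assert (Hnum : 2 * (2 * Rabs y0 * (a * (r2 + y0 ^ 2)) + 2 * a ^ 2 * (su * sv))
                   <= 5 * a * (Rabs y0 + a) * r2).
    { assert (Hty : 0 <= Rabs y0 * a) by (pose proof (Rabs_pos y0); nra).
      assert (Hy : y0 ^ 2 <= r2 / 4) by lra.
      pose proof (Rmult_le_compat_l _ _ _ Hty Hy).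
      assert (a ^ 2 * (su * sv) <= a ^ 2 * (5 / 4 * r2)) by (apply Rmult_le_compat_l; lra).
      lra. }
    assert (HAr : A * (r2 / 4 * (r2 / 4)) <= 5 * a * (Rabs y0 + a) * r2).
    { pose proof (Rmult_le_compat_l _ _ _ HA HUV). lra. }
    apply (Rmult_le_reg_r (r2 / 16)); [lra|].
    pose proof (Rabs_pos y0). nra.
Qed.

Lemma Arg_phase_step_le (a y0 X Y h1 h2 : R) :
  0 < a -> h1 ^ 2 + h2 ^ 2 = a ^ 2 -> 64 * a ^ 2 + 4 * y0 ^ 2 <= X ^ 2 + Y ^ 2 ->
  Rabs (Arg (cdiv (phase_factor (X + h1) (Y + h2) y0) (phase_factor X Y y0))) * (X ^ 2 + Y ^ 2)
    <= 80 * a * (Rabs y0 + a).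
Proof.
  intros Ha Hh Hfar.
  destruct (Arg_phase_step_product_le a y0 X Y h1 h2 Ha Hh Hfar) as [Hre Harg].
  rewrite <- phase_step_product in Hre, Harg.
  unfold phase_factor. rewrite Arg_cdiv_cnormalize by exact Hre.
  exact Harg.
Qed.

Definition center_dist2 (a x0 : R) (l1 l2 : Z) : R := (IZR l1 * a - x0) ^ 2 + (IZR l2 * a) ^ 2.

Definition eps_decay_const (a y0 : R) : R := a / (2 * PI) * (80 * a * (Rabs y0 + a)).

Lemma Rabs_scaled_Arg_mul_le (a r b : R) (z : Defs.C) :
  0 < a -> Rabs (Arg z) * r <= b -> Rabs (a / (2 * PI) * Arg z) * r <= a / (2 * PI) * b.
Proof.
  intros Ha H. pose proof PI_RGT_0.
  assert (Hc : 0 < a / (2 * PI)) by (apply Rdiv_lt_0_compat; lra).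
  rewrite Rabs_mult, (Rabs_pos_eq (a / (2 * PI))), Rmult_assoc by lra.
  apply Rmult_le_compat_l; lra.
Qed.

Lemma sfun_eq_phase_factor (a x0 y0 : R) (l1 l2 : Z) :
  sfun a x0 y0 l1 l2 = phase_factor (IZR l1 * a - x0) (IZR l2 * a) y0.
Proof. reflexivity. Qed.

Lemma Rabs_eps1_mul_dist2_le (a x0 y0 : R) (l1 l2 : Z) :
  0 < a -> 64 * a ^ 2 + 4 * y0 ^ 2 <= center_dist2 a x0 l1 l2 ->
  Rabs (Defs.eps1 a x0 y0 l1 l2) * center_dist2 a x0 l1 l2 <= eps_decay_const a y0.
Proof.
  intros Ha Hfar. apply Rabs_scaled_Arg_mul_le; [exact Ha|].
  pose proof (Arg_phase_step_le a y0 (IZR l1 * a - x0) (IZR l2 * a) a 0 Ha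
                ltac:(ring) Hfar) as H.
  rewrite Rplus_0_r in H.
  rewrite !sfun_eq_phase_factor, plus_IZR.
  replace ((IZR l1 + 1) * a - x0) with (IZR l1 * a - x0 + a) by ring.
  exact H.
Qed.

Lemma Rabs_eps2_mul_dist2_le (a x0 y0 : R) (l1 l2 : Z) :
  0 < a -> 64 * a ^ 2 + 4 * y0 ^ 2 <= center_dist2 a x0 l1 l2 ->
  Rabs (Defs.eps2 a x0 y0 l1 l2) * center_dist2 a x0 l1 l2 <= eps_decay_const a y0.
Proof.
  intros Ha Hfar. apply Rabs_scaled_Arg_mul_le; [exact Ha|].
  pose proof (Arg_phase_step_le a y0 (IZR l1 * a - x0) (IZR l2 * a) 0 a Ha
                ltac:(ring) Hfar) as H.
  rewrite Rplus_0_r in H.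
  rewrite !sfun_eq_phase_factor, plus_IZR.
  replace ((IZR l2 + 1) * a) with (IZR l2 * a + a) by ring.
  exact H.
Qed.

Lemma Dplus_sq_le (a d : R) : 0 < a -> Rabs d <= a -> Defs.Dplus a d ^ 2 <= 9 * d ^ 2.
Proof.
  intros Ha Hd. apply Rabs_le_between in Hd. unfold Defs.Dplus.
  set (s := sqrt ((a + d) ^ 2 + a ^ 2)). set (c := sqrt 2 * a).
  assert (Hs : s ^ 2 = (a + d) ^ 2 + a ^ 2) by (apply pow2_sqrt; nra).
  assert (Hs0 : 0 <= s) by apply sqrt_pos.
  assert (H2 : sqrt 2 ^ 2 = 2) by (apply pow2_sqrt; lra).
  assert (H21 : 1 <= sqrt 2) by (rewrite <- sqrt_1; apply sqrt_le_1_alt; lra).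
  assert (Hc : c ^ 2 = 2 * a ^ 2) by (unfold c; rewrite Rpow_mult_distr, H2; ring).
  assert (Hca : a <= c) by (unfold c; nra).
  (* [(s - c) (s + c) = d (2 a + d)] with [s + c >= a] and [|2 a + d| <= 3 a]. *)
  assert (Hdiff : (s - c) * (s + c) = d * (2 * a + d)) by nra.
  assert (Hnum : (d * (2 * a + d)) ^ 2 <= (3 * a * d) ^ 2).
  { replace ((d * (2 * a + d)) ^ 2) with (d ^ 2 * (2 * a + d) ^ 2) by ring.
    replace ((3 * a * d) ^ 2) with (d ^ 2 * (3 * a) ^ 2) by ring.
    apply Rmult_le_compat_l; [apply pow2_ge_0|]. apply pow_incr. lra. }
  assert (Hden : a ^ 2 * (s - c) ^ 2 <= (s + c) ^ 2 * (s - c) ^ 2).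
  { apply Rmult_le_compat_r; [apply pow2_ge_0|]. apply pow_incr. lra. }
  apply (Rmult_le_reg_l (a ^ 2)); [apply pow_lt; lra|].
  replace ((s + c) ^ 2 * (s - c) ^ 2) with ((d * (2 * a + d)) ^ 2) in Hden
    by (rewrite <- Hdiff; ring).
  nra.
Qed.

Lemma Dminus_eq_Dplus_opp (a e : R) : Defs.Dminus a e = Defs.Dplus a (- e).
Proof. reflexivity. Qed.

Lemma site_energy_nonneg (a kd x0 y0 : R) (l1 l2 : Z) :
  0 < kd -> 0 <= site_energy a kd x0 y0 l1 l2.
Proof.
  intro Hk. unfold site_energy. apply Rmult_le_pos; [lra|].
  repeat apply Rplus_le_le_0_compat; apply pow2_ge_0.
Qed.

Lemma site_energy_le_eps_sq (a kd x0 y0 : R) (l1 l2 : Z) :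
  0 < a -> 0 < kd ->
  site_energy a kd x0 y0 l1 l2
    <= 9 * kd * (Defs.eps1 a x0 y0 l1 l2 ^ 2 + Defs.eps2 a x0 y0 l1 l2 ^ 2).
Proof.
  intros Ha Hk. unfold site_energy. rewrite !Dminus_eq_Dplus_opp.
  assert (H1 : Rabs (Defs.eps1 a x0 y0 l1 l2) <= a) by apply (Rabs_scaled_Arg_le _ _ Ha).
  assert (H2 : Rabs (Defs.eps2 a x0 y0 l1 l2) <= a) by apply (Rabs_scaled_Arg_le _ _ Ha).
  set (e1 := Defs.eps1 a x0 y0 l1 l2) in *. set (e2 := Defs.eps2 a x0 y0 l1 l2) in *.
  pose proof (Dplus_sq_le a e1 Ha H1). pose proof (Dplus_sq_le a e2 Ha H2).
  pose proof (Dplus_sq_le a (- e1) Ha ltac:(rewrite Rabs_Ropp; exact H1)).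
  pose proof (Dplus_sq_le a (- e2) Ha ltac:(rewrite Rabs_Ropp; exact H2)).
  replace ((- e1) ^ 2) with (e1 ^ 2) in * by ring.
  replace ((- e2) ^ 2) with (e2 ^ 2) in * by ring.
  nra.
Qed.

Lemma site_energy_le (a kd x0 y0 : R) (l1 l2 : Z) :
  0 < a -> 0 < kd -> site_energy a kd x0 y0 l1 l2 <= 18 * kd * a ^ 2.
Proof.
  intros Ha Hk. eapply Rle_trans; [apply site_energy_le_eps_sq; assumption|].
  assert (H1 : Rabs (Defs.eps1 a x0 y0 l1 l2) <= a) by apply (Rabs_scaled_Arg_le _ _ Ha).
  assert (H2 : Rabs (Defs.eps2 a x0 y0 l1 l2) <= a) by apply (Rabs_scaled_Arg_le _ _ Ha).
  apply sqr_le_of_Rabs_le in H1, H2. nra.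
Qed.

Lemma site_energy_mul_dist2_sq_le (a kd x0 y0 : R) (l1 l2 : Z) :
  0 < a -> 0 < kd -> 64 * a ^ 2 + 4 * y0 ^ 2 <= center_dist2 a x0 l1 l2 ->
  site_energy a kd x0 y0 l1 l2 * center_dist2 a x0 l1 l2 ^ 2 <= 18 * kd * eps_decay_const a y0 ^ 2.
Proof.
  intros Ha Hk Hfar.
  assert (Hr : 0 <= center_dist2 a x0 l1 l2) by (pose proof (pow2_ge_0 y0); nra).
  pose proof (Rabs_eps1_mul_dist2_le a x0 y0 l1 l2 Ha Hfar) as H1.
  pose proof (Rabs_eps2_mul_dist2_le a x0 y0 l1 l2 Ha Hfar) as H2.
  rewrite <- (Rabs_pos_eq _ Hr), <- Rabs_mult in H1, H2.
  apply sqr_le_of_Rabs_le in H1, H2.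
  pose proof (site_energy_le_eps_sq a kd x0 y0 l1 l2 Ha Hk).
  rewrite Rpow_mult_distr in H1, H2.
  assert (0 <= center_dist2 a x0 l1 l2 ^ 2) by apply pow2_ge_0.
  nra.
Qed.

Lemma near_far_bound (f r n A B R0 c : R) :
  0 <= f -> f <= A -> 0 <= B -> (R0 <= r -> f * r ^ 2 <= B) ->
  0 <= c <= R0 -> 0 <= n -> n <= 2 * r + c ->
  f * n ^ 2 <= A * (2 * R0 + c) ^ 2 + 9 * B.
Proof.
  intros Hf HA HB Hfar Hc Hn Hnr.
  assert (HA0 : 0 <= A * (2 * R0 + c) ^ 2) by (apply Rmult_le_pos; [lra | apply pow2_ge_0]).
  destruct (Rle_lt_dec R0 r) as [Hr | Hr].
  - specialize (Hfar Hr).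
    assert (n ^ 2 <= (3 * r) ^ 2) by (apply pow_incr; lra).
    assert (f * n ^ 2 <= f * (3 * r) ^ 2) by (apply Rmult_le_compat_l; assumption).
    nra.
  - assert (n ^ 2 <= (2 * R0 + c) ^ 2) by (apply pow_incr; lra).
    assert (f * n ^ 2 <= A * (2 * R0 + c) ^ 2)
      by (apply Rmult_le_compat; [assumption | apply pow2_ge_0 | assumption | assumption]).
    lra.
Qed.

Lemma lattice_norm_le_dist2 (a x0 : R) (l1 l2 : Z) :
  a ^ 2 * (1 + IZR l1 ^ 2 + IZR l2 ^ 2) <= 2 * center_dist2 a x0 l1 l2 + (a ^ 2 + 2 * x0 ^ 2).
Proof.
  unfold center_dist2.
  pose proof (pow2_ge_0 (IZR l1 * a - 2 * x0)). pose proof (pow2_ge_0 (IZR l2 * a)). nra.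
Qed.

Definition lattice_weight (l : Z) : R := / (1 + IZR l ^ 2).

Lemma lattice_weight_pos (l : Z) : 0 < lattice_weight l.
Proof. apply Rinv_0_lt_compat. pose proof (pow2_ge_0 (IZR l)). lra. Qed.

Lemma site_energy_le_weight (a kd x0 y0 : R) :
  0 < a -> 0 < kd ->
  exists Cw : R, 0 <= Cw /\ forall l1 l2 : Z,
    site_energy a kd x0 y0 l1 l2 <= Cw * (lattice_weight l1 * lattice_weight l2).
Proof.
  intros Ha Hk.
  set (c := a ^ 2 + 2 * x0 ^ 2). set (R0 := 64 * a ^ 2 + 4 * y0 ^ 2 + c).
  set (A := 18 * kd * a ^ 2). set (B := 18 * kd * eps_decay_const a y0 ^ 2).
  assert (Ha4 : 0 < a ^ 4) by (apply pow_lt; lra).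
  assert (Hc : 0 <= c <= R0)
    by (unfold R0, c; pose proof (pow2_ge_0 a); pose proof (pow2_ge_0 x0); pose proof (pow2_ge_0 y0); lra).
  assert (HB : 0 <= B) by (unfold B; pose proof (pow2_ge_0 (eps_decay_const a y0)); nra).
  assert (HA : 0 <= A) by (unfold A; pose proof (pow2_ge_0 a); nra).
  exists ((A * (2 * R0 + c) ^ 2 + 9 * B) / a ^ 4). split.
  { apply Rmult_le_pos; [pose proof (pow2_ge_0 (2 * R0 + c)); nra | left; apply Rinv_0_lt_compat, Ha4]. }
  intros l1 l2.
  set (p2 := IZR l1 ^ 2). set (q2 := IZR l2 ^ 2).
  assert (Hp : 0 <= p2) by apply pow2_ge_0. assert (Hq : 0 <= q2) by apply pow2_ge_0.
  pose proof (site_energy_nonneg a kd x0 y0 l1 l2 Hk) as Hf.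
  pose proof (near_far_bound (site_energy a kd x0 y0 l1 l2) (center_dist2 a x0 l1 l2)
                (a ^ 2 * (1 + p2 + q2)) A B R0 c Hf (site_energy_le a kd x0 y0 l1 l2 Ha Hk) HB
                ltac:(intro; apply site_energy_mul_dist2_sq_le; unfold R0 in *; lra) Hc
                ltac:(apply Rmult_le_pos; [apply pow2_ge_0 | lra])
                (lattice_norm_le_dist2 a x0 l1 l2)) as Hbound.
  unfold lattice_weight; fold p2 q2.
  replace ((A * (2 * R0 + c) ^ 2 + 9 * B) / a ^ 4 * (/ (1 + p2) * / (1 + q2)))
    with ((A * (2 * R0 + c) ^ 2 + 9 * B) / (a ^ 4 * ((1 + p2) * (1 + q2)))) by (field; lra).
  assert (HD : 0 < a ^ 4 * ((1 + p2) * (1 + q2))) by (apply Rmult_lt_0_compat; nra).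
  apply (Rmult_le_reg_r _ _ _ HD).
  unfold Rdiv. rewrite Rmult_assoc, Rinv_l, Rmult_1_r by lra.
  apply Rle_trans with (site_energy a kd x0 y0 l1 l2 * (a ^ 2 * (1 + p2 + q2)) ^ 2); [|exact Hbound].
  apply Rmult_le_compat_l; [exact Hf|]. nra.
Qed.

Definition box_sum (K : nat) (g : Z -> R) : R :=
  sum_f_R0 (fun i => g (Z.of_nat i - Z.of_nat K)%Z) (2 * K).

Definition box_sum2 (K : nat) (f : Z -> Z -> R) : R :=
  box_sum K (fun l1 => box_sum K (fun l2 => f l1 l2)).

Lemma box_sum_S (K : nat) (g : Z -> R) :
  box_sum (S K) g = g (- Z.of_nat (S K))%Z + box_sum K g + g (Z.of_nat (S K)).
Proof.
  unfold box_sum. replace (2 * S K)%nat with (S (S (2 * K))) by lia.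
  rewrite decomp_sum by lia. cbn [Nat.pred]. rewrite tech5.
  replace (Z.of_nat 0 - Z.of_nat (S K))%Z with (- Z.of_nat (S K))%Z by lia.
  replace (Z.of_nat (S (S (2 * K))) - Z.of_nat (S K))%Z with (Z.of_nat (S K)) by lia.
  rewrite (sum_eq _ (fun i => g (Z.of_nat i - Z.of_nat K)%Z))
    by (intros i _; f_equal; lia).
  ring.
Qed.

Lemma box_sum_nonneg (K : nat) (g : Z -> R) : (forall l, 0 <= g l) -> 0 <= box_sum K g.
Proof. intro H. apply cond_pos_sum. intro; apply H. Qed.

Lemma box_sum_le (K : nat) (g h : Z -> R) :
  (forall l, g l <= h l) -> box_sum K g <= box_sum K h.
Proof. intro H. apply sum_Rle. intros; apply H. Qed.

Lemma box_sum_mono (K K' : nat) (g : Z -> R) :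
  (forall l, 0 <= g l) -> (K <= K')%nat -> box_sum K g <= box_sum K' g.
Proof.
  intros H HK. induction HK as [|K' _ IH]; [lra|].
  rewrite box_sum_S. pose proof (H (- Z.of_nat (S K'))%Z). pose proof (H (Z.of_nat (S K'))). lra.
Qed.

Lemma box_sum_scal_l (K : nat) (c : R) (g : Z -> R) :
  box_sum K (fun l => c * g l) = c * box_sum K g.
Proof. unfold box_sum. rewrite scal_sum. apply sum_eq. intros; ring. Qed.

Lemma box_sum2_le (K : nat) (f h : Z -> Z -> R) :
  (forall l1 l2, f l1 l2 <= h l1 l2) -> box_sum2 K f <= box_sum2 K h.
Proof. intro H. apply box_sum_le. intro; apply box_sum_le. auto. Qed.

Lemma box_sum2_mono (K K' : nat) (f : Z -> Z -> R) :
  (forall l1 l2, 0 <= f l1 l2) -> (K <= K')%nat -> box_sum2 K f <= box_sum2 K' f.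
Proof.
  intros H HK. unfold box_sum2.
  apply Rle_trans with (box_sum K (fun l1 => box_sum K' (fun l2 => f l1 l2))).
  - apply box_sum_le. intro. apply box_sum_mono; auto.
  - apply box_sum_mono; [intro; apply box_sum_nonneg; auto | exact HK].
Qed.

Lemma box_sum2_prod (K : nat) (g h : Z -> R) :
  box_sum2 K (fun l1 l2 => g l1 * h l2) = box_sum K g * box_sum K h.
Proof.
  unfold box_sum2. rewrite Rmult_comm, <- box_sum_scal_l.
  unfold box_sum at 1 3. apply sum_eq. intros. rewrite box_sum_scal_l. ring.
Qed.

(* Telescoping: [2 / (1 + m^2) <= 4 / m - 4 / (m + 1)] for [m >= 1]. *)
Lemma box_sum_lattice_weight_le (K : nat) : box_sum K lattice_weight <= 5 - 4 / (INR K + 1).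
Proof.
  induction K as [|K IH].
  - unfold box_sum, lattice_weight. simpl. lra.
  - rewrite box_sum_S. unfold lattice_weight at 1 3. rewrite opp_IZR, <- INR_IZR_INZ, S_INR.
    set (m := INR K + 1) in *.
    assert (Hm : 1 <= m) by (unfold m; pose proof (pos_INR K); lra).
    replace ((- m) ^ 2) with (m ^ 2) by ring.
    assert (/ (1 + m ^ 2) <= 2 / m - 2 / (m + 1)).
    { apply Rmult_le_reg_r with ((1 + m ^ 2) * (m * (m + 1))); [nra|].
      replace (/ (1 + m ^ 2) * ((1 + m ^ 2) * (m * (m + 1)))) with (m * (m + 1)) by (field; nra).
      replace ((2 / m - 2 / (m + 1)) * ((1 + m ^ 2) * (m * (m + 1)))) with (2 * (1 + m ^ 2))
        by (field; lra).
      nra. }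
    lra.
Qed.

Lemma box_sum2_weight_le (K : nat) (Cw : R) (f : Z -> Z -> R) :
  0 <= Cw -> (forall l1 l2, f l1 l2 <= Cw * (lattice_weight l1 * lattice_weight l2)) ->
  box_sum2 K f <= 25 * Cw.
Proof.
  intros HC H.
  eapply Rle_trans.
  { apply box_sum2_le with (h := fun l1 l2 => Cw * lattice_weight l1 * lattice_weight l2).
    intros l1 l2. rewrite Rmult_assoc. apply H. }
  rewrite box_sum2_prod, box_sum_scal_l.
  pose proof (box_sum_lattice_weight_le K).
  assert (0 < 4 / (INR K + 1)) by (apply Rdiv_lt_0_compat; pose proof (pos_INR K); lra).
  pose proof (box_sum_nonneg K lattice_weight (fun l => Rlt_le _ _ (lattice_weight_pos l))).
  assert (box_sum K lattice_weight * box_sum K lattice_weight <= 5 * 5) by nra.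
  nra.
Qed.

Definition site_energy_in (a kd x0 y0 rho N : R) (l1 l2 : Z) : R :=
  if inB_dec a x0 y0 rho N l1 l2 then site_energy a kd x0 y0 l1 l2 else 0.

Lemma E_eq_box_sum2 (a kd x0 y0 rho N : R) :
  E a kd x0 y0 rho N = box_sum2 (boxK a x0 y0 N) (site_energy_in a kd x0 y0 rho N).
Proof. reflexivity. Qed.

Lemma site_energy_in_nonneg (a kd x0 y0 rho N : R) (l1 l2 : Z) :
  0 < kd -> 0 <= site_energy_in a kd x0 y0 rho N l1 l2.
Proof. intro Hk. unfold site_energy_in. destruct inB_dec; [apply site_energy_nonneg; exact Hk | lra]. Qed.

Lemma site_energy_in_mono (a kd x0 y0 rho N N' : R) (l1 l2 : Z) :
  0 < a -> 0 < kd -> N <= N' ->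
  site_energy_in a kd x0 y0 rho N l1 l2 <= site_energy_in a kd x0 y0 rho N' l1 l2.
Proof.
  intros Ha Hk HN. unfold site_energy_in.
  destruct (inB_dec a x0 y0 rho N l1 l2) as [I|I], (inB_dec a x0 y0 rho N' l1 l2) as [I'|I'].
  - lra.
  - exfalso. apply I'. unfold inB in *. assert (N * a <= N' * a) by nra. lra.
  - apply site_energy_nonneg; exact Hk.
  - lra.
Qed.

Lemma up_le_up (x y : R) : x <= y -> (up x <= up y)%Z.
Proof.
  intro H. destruct (archimed x) as [Hx1 Hx2], (archimed y) as [Hy1 Hy2].
  destruct (Z_le_gt_dec (up x) (up y)) as [|Hlt]; [assumption|].
  assert (Hle : (up y <= up x - 1)%Z) by lia.
  apply IZR_le in Hle. rewrite minus_IZR in Hle. lra.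
Qed.

Lemma boxK_mono (a x0 y0 N N' : R) : N <= N' -> (boxK a x0 y0 N <= boxK a x0 y0 N')%nat.
Proof.
  intro HN. unfold boxK.
  pose proof (up_le_up (N + Rabs x0 / a + Rabs y0 / a) (N' + Rabs x0 / a + Rabs y0 / a) ltac:(lra)).
  lia.
Qed.

Lemma E_mono (a kd x0 y0 rho N N' : R) :
  0 < a -> 0 < kd -> N <= N' -> E a kd x0 y0 rho N <= E a kd x0 y0 rho N'.
Proof.
  intros Ha Hk HN. rewrite !E_eq_box_sum2.
  apply Rle_trans with (box_sum2 (boxK a x0 y0 N) (site_energy_in a kd x0 y0 rho N')).
  - apply box_sum2_le. intros. apply site_energy_in_mono; assumption.
  - apply box_sum2_mono; [intros; apply site_energy_in_nonneg; exact Hk | apply boxK_mono; exact HN].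
Qed.

Lemma E_bounded (a kd x0 y0 rho : R) :
  0 < a -> 0 < kd -> exists B : R, forall N : R, E a kd x0 y0 rho N <= B.
Proof.
  intros Ha Hk. destruct (site_energy_le_weight a kd x0 y0 Ha Hk) as [Cw [HC Hw]].
  exists (25 * Cw). intro N. rewrite E_eq_box_sum2.
  apply box_sum2_weight_le; [exact HC|]. intros l1 l2. unfold site_energy_in.
  destruct inB_dec; [apply Hw|].
  pose proof (lattice_weight_pos l1). pose proof (lattice_weight_pos l2).
  apply Rmult_le_pos; [exact HC | nra].
Qed.

Lemma nondecreasing_bounded_cvg (f : R -> R) (rho B : R) :
  (forall N N', rho < N -> N <= N' -> f N <= f N') -> (forall N, rho < N -> f N <= B) ->
  exists L : R, forall eps : R, 0 < eps ->
    exists N0 : R, forall N : R, N > rho -> N > N0 -> Rabs (f N - L) < eps.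
Proof.
  intros Hmono Hbound.
  set (A := fun y => exists N, rho < N /\ y = f N).
  assert (HA : bound A) by (exists B; intros y [N [HN ->]]; apply Hbound, HN).
  assert (Hne : exists y, A y) by (exists (f (rho + 1)), (rho + 1); split; [lra | reflexivity]).
  destruct (completeness A HA Hne) as [L [Hub Hlub]].
  exists L. intros eps Heps.
  destruct (classic (exists N1, rho < N1 /\ L - eps < f N1)) as [[N1 [HN1 Hclose]] | Hfar].
  - exists N1. intros N HN HN1'.
    assert (f N1 <= f N) by (apply Hmono; lra).
    assert (f N <= L) by (apply Hub; exists N; split; [lra | reflexivity]).
    apply Rabs_def1; lra.
  - exfalso. assert (L <= L - eps); [|lra].
    apply Hlub. intros y [N [HN ->]].
    apply Rnot_lt_le. intro Hlt. apply Hfar. exists N. split; assumption.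
Qed.

Theorem lemmaA2 (a kd x0 y0 rho : R) :
  0 < a -> 0 < kd -> y0 <> 0 -> 0 < rho -> rho * a > 2 * Rabs y0 ->
  exists L : R, forall eps : R, 0 < eps ->
    exists N0 : R, forall N : R, N > rho -> N > N0 ->
      Rabs (E a kd x0 y0 rho N - L) < eps.
Proof.
  intros Ha Hk _ _ _.
  destruct (E_bounded a kd x0 y0 rho Ha Hk) as [B HB].
  apply (nondecreasing_bounded_cvg _ rho B).
  - intros N N' _ HN. apply E_mono; assumption.
  - intros N _. apply HB.
Qed.
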